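(* Under the standing assumptions, suppose in addition that $g$ is e-convex. Then the following are equivalent: (i) strong duality holds for $(P)-(D^F)$; (ii) strong duality holds for $(P)-(\bar D^F)$ and $\Omega\cap B=K\cap B$.
   Context: Let $X$ be a nontrivial separated locally convex space with topological dual $X^*$, endowed with the topology $\sigma(X,X^* )$; $\langle x,x^*\rangle$ is the value of $x^*\in X^*$ at $x\in X$. Put $W:=X^*\times X^*\times\mathbb{R}$, $\mathbb{R}_{++}:=]0,+\infty[$ and $Z:=X^*\times X^*\times\mathbb{R}_{++}$. For $y^*\in X^*$, $\alpha\in\mathbb{R}$, let $H^-_{y^*,\alpha}:=\{x\in X:\langle x,y^*\rangle<\alpha\}$. The coupling function $c:X\times W\to\overline{\mathbb{R}}$ is $c(x,(x^*,y^*,\alpha)):=\langle x,x^*\rangle$ if $\langle x,y^*\rangle<\alpha$ and $:=+\infty$ otherwise. For $h:X\to\overline{\mathbb{R}}$ its $c$-conjugate is $h^c:W\to\overline{\mathbb{R}}$, $h^c(w):=\sup_{x\in X}\{c(x,w)-h(x)\}$, with the convention $(+\infty)+(-\infty)=(-\infty)+(+\infty)=(+\infty)-(+\infty)=(-\infty)-(-\infty)=-\infty$ (so for proper $h$, $h^c(x^*,y^*,\alpha)=h^*(x^* )$ if $\operatorname{dom}h\subseteq H^-_{y^*,\alpha}$ and $+\infty$ otherwise). Epigraphs of functions on $W$ are subsets of $W\times\mathbb{R}$. $\delta_A$ is the indicator function of $A$. For $E\subseteq W\times\mathbb{R}$ and $e\in W\times\mathbb{R}$, $E-e:=\{z-e:z\in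 E\}$. A set $C\subseteq X\times\mathbb{R}$ is e-convex if for every point $p\notin C$ there is a continuous linear functional $\ell$ on $X\times\mathbb{R}$ with $\ell(q-p)<0$ for all $q\in C$; a function is e-convex if its epigraph is e-convex. Standing assumptions: $f,g:X\to\overline{\mathbb{R}}$ proper convex with $\operatorname{dom}f\subseteq\operatorname{dom}g$, $A\subseteq X$ nonempty, convention $(+\infty)-(+\infty)=+\infty$ in $f-g$; $v(P)=\inf_{x\in X}\{f(x)-g(x)+\delta_A(x)\}$. With $\varphi(u^*,v^*,\gamma;x^*,y^*,\alpha):=g^c(u^*,v^*,\gamma)-f^c(u^*-x^*,-y^*,\alpha)-\delta_A^c(x^*,y^*,\alpha)$: $v(D^F):=\sup_{(x^*,y^*,\alpha)\in Z}\inf_{(u^*,v^*,\gamma)\in\operatorname{dom}g^c}\varphi$ and $v(\bar D^F):=\inf_{(u^*,v^*,\gamma)\in\operatorname{dom}g^c}\sup_{(x^*,y^*,\alpha)\in Z}\varphi$. Strong duality for $(P)-(D^F)$ means $v(P)=v(D^F)$ and there is $(\bar x^*,\bar y^*,\bar\alpha)\in\operatorname{dom}\delta_A^c$ with $\varphi(u^*,v^*,\gamma;\bar x^*,\bar y^*,\bar\alpha)\ge v(D^F)$ for all $(u^*,v^*,\gamma)\in\operatorname{dom}g^c$. Strong duality for $(P)-(\bar D^F)$ means $v(P)=v(\bar D^F)$ and for every $(u^*,v^*,\gamma)\in\operatorname{dom}g^c$ there is $(x^*,y^*,\alpha)\in\operatorname{dom}\delta_A^c$ with $\varphi(u^*,v^*,\gamma;x^*,y^*,\alpha)\ge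 v(\bar D^F)$. Sets: $B:=\{0\}\times\{0\}\times\mathbb{R}_{++}\times\mathbb{R}\subseteq W\times\mathbb{R}$; $\Omega:=\bigcup_{(x^*,y^*,\alpha)\in\operatorname{dom}\delta_A^c}\ \bigcap_{(u^*,v^*,\gamma)\in\operatorname{dom}g^c}\Big[\operatorname{epi}\big(f-c(\cdot,(-x^*,-y^*,\alpha))\big)^c-\big(u^*,0,0,g^c(u^*,v^*,\gamma)-\delta_A^c(x^*,y^*,\alpha)\big)\Big]$, $K:=\bigcap_{(u^*,v^*,\gamma)\in\operatorname{dom}g^c}\ \bigcup_{(x^*,y^*,\alpha)\in\operatorname{dom}\delta_A^c}\Big[\operatorname{epi}\big(f-c(\cdot,(-x^*,-y^*,\alpha))\big)^c-\big(u^*,0,0,g^c(u^*,v^*,\gamma)-\delta_A^c(x^*,y^*,\alpha)\big)\Big]$. *)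

From HB Require Import structures.
From mathcomp Require Import all_boot all_order all_algebra.
From mathcomp Require Import all_classical all_reals all_analysis.
Set Implicit Arguments. Unset Strict Implicit. Unset Printing Implicit Defensive.
Import Order.TTheory GRing.Theory Num.Theory.
Import numFieldTopology.Exports.
Local Open Scope classical_set_scope.
Local Open Scope ring_scope.

Section DualityDefs.
Variables (R : realType) (X : tvsType R).

(* x* belongs to the topological dual X^* : a continuous linear functional.
   (The continuous linear functionals for sigma(X,X^* ) are exactly X^*.) *)
Definition IsDual (l : X -> R) : Prop :=
  (forall (a : R) (x y : X), l (a *: x + y) = a * l x + l y) /\ continuous l.

(* Wsp := X^* x X^* x R, represented inside (X -> R) * (X -> R) * R;
   membership in Wsp is the predicate inW. *)
Definition Wsp := ((X -> R) * (X -> R) * R)%type.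
Definition inW (w : Wsp) : Prop := IsDual w.1.1 /\ IsDual w.1.2.
Definition inZ (w : Wsp) : Prop := inW w /\ 0 < w.2.

Local Open Scope ereal_scope.

Definition cpl (x : X) (w : Wsp) : \bar R :=
  if (w.1.2 x < w.2)%R then (w.1.1 x)%:E else +oo.

(* c-conjugate, with mathcomp's addition (-oo absorbing), i.e. the convention
   (+oo)+(-oo) = (+oo)-(+oo) = (-oo)-(-oo) = -oo. Only meaningful on inW. *)
Definition cconj (h : X -> \bar R) (w : Wsp) : \bar R :=
  ereal_sup [set cpl x w - h x | x in [set: X]].

Definition domW (h : Wsp -> \bar R) : set Wsp := [set w | inW w /\ h w < +oo].

Definition indicator_fun (A : set X) (x : X) : \bar R := if `[< A x >] then 0 else +oo.

Definition proper_fun (f : X -> \bar R) : Prop :=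
  (forall x, f x != -oo) /\ (exists x, f x < +oo).

Definition convex_fun (f : X -> \bar R) : Prop :=
  forall (x y : X) (r s t : R), f x <= r%:E -> f y <= s%:E ->
    (0 <= t <= 1)%R ->
    f (t *: x + (1 - t) *: y)%R <= (t * r + (1 - t) * s)%:E.

(* e-convexity of f: epi f is e-convex in X x R; continuous linear functionals
   on X x R are (x,r) |-> <x,x*> + a r with x* in X^*, a in R. *)
Definition e_convex_fun (f : X -> \bar R) : Prop :=
  forall (p : X) (rho : R), ~ (f p <= rho%:E) ->
    exists (xs : X -> R) (a : R), IsDual xs /\
      forall (x : X) (r : R), f x <= r%:E ->
        (xs (x - p) + a * (r - rho) < 0)%R.

(* f - g with the convention (+oo) - (+oo) = +oo (dual addition) *)
Definition subd (a b : \bar R) : \bar R := dual_adde a (- b).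

Section Problem.
Variables (f g : X -> \bar R) (A : set X).

Definition vP : \bar R :=
  ereal_inf [set dual_adde (subd (f x) (g x)) (indicator_fun A x) | x in [set: X]].

Definition phiF (u xw : Wsp) : \bar R :=
  cconj g u - cconj f ((fun z => u.1.1 z - xw.1.1 z)%R, (fun z => - xw.1.2 z)%R, xw.2)
  - cconj (indicator_fun A) xw.

Definition vDF : \bar R :=
  ereal_sup [set ereal_inf [set phiF u xw | u in domW (cconj g)] | xw in inZ].

Definition vDFbar : \bar R :=
  ereal_inf [set ereal_sup [set phiF u xw | xw in inZ] | u in domW (cconj g)].

Definition strong_duality_DF : Prop :=
  vP = vDF /\
  exists xb : Wsp, domW (cconj (indicator_fun A)) xb /\
    forall u, domW (cconj g) u -> vDF <= phiF u xb.

Definition strong_duality_DFbar : Prop :=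
  vP = vDFbar /\
  forall u, domW (cconj g) u ->
    exists xw : Wsp, domW (cconj (indicator_fun A)) xw /\ vDFbar <= phiF u xw.

Definition epiW (h : Wsp -> \bar R) : set (Wsp * R) :=
  [set p | inW p.1 /\ h p.1 <= p.2%:E].

Definition subWR (z e : Wsp * R) : Wsp * R :=
  (((fun t => z.1.1.1 t - e.1.1.1 t)%R, (fun t => z.1.1.2 t - e.1.1.2 t)%R, (z.1.2 - e.1.2)%R),
   (z.2 - e.2)%R).

Definition translateWR (E : set (Wsp * R)) (e : Wsp * R) : set (Wsp * R) :=
  [set subWR z e | z in E].

Definition fminc (xw : Wsp) : X -> \bar R :=
  fun z => subd (f z) (cpl z ((fun t => - xw.1.1 t)%R, (fun t => - xw.1.2 t)%R, xw.2)).

(* the point (u*, 0, 0, g^c(u*,v*,gamma) - delta_A^c(x*,y*,alpha)) of Wsp x R;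
   the last coordinate is real on dom g^c x dom delta_A^c *)
Definition shiftpt (u xw : Wsp) : Wsp * R :=
  ((u.1.1, (fun _ => 0%R), 0%R), fine (cconj g u - cconj (indicator_fun A) xw)).

Definition pieceWR (u xw : Wsp) : set (Wsp * R) :=
  translateWR (epiW (cconj (fminc xw))) (shiftpt u xw).

Definition OmegaSet : set (Wsp * R) :=
  \bigcup_(xw in domW (cconj (indicator_fun A))) \bigcap_(u in domW (cconj g)) pieceWR u xw.

Definition Kset : set (Wsp * R) :=
  \bigcap_(u in domW (cconj g)) \bigcup_(xw in domW (cconj (indicator_fun A))) pieceWR u xw.

Definition Bset : set (Wsp * R) :=
  [set p | p.1.1.1 = (fun _ => 0%R) /\ p.1.1.2 = (fun _ => 0%R) /\ (0 < p.1.2)%R].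

End Problem.
End DualityDefs.

From HB Require Import structures.
From mathcomp Require Import all_boot all_order all_algebra.
From mathcomp Require Import all_classical all_reals all_analysis.
From mathcomp Require Import lra.

(* On B the pieces of Omega and K are sublevel sets of phi: (0, 0, alpha, r)
   belongs to the piece of (u, xw) iff -r <= phi(u; xw).  Hence Omega ∩ B
   collects the levels reached by one xw uniformly in u, and K ∩ B those
   reached, for each u, by some xw.  E-convexity of g provides, at every point
   of dom g, e-subgradients (u*, 0, 1) in dom g^c; comparing phi(u; xw) with
   g^c(u) - <x, u*> + f x then bounds v(P) below by every level of K ∩ B, and
   in particular v(Dbar^F) <= v(P).  As v(D^F) <= v(Dbar^F) always, (i) forces
   equal values and Omega ∩ B = K ∩ B; conversely (0, 0, 1, -v(P)) lies in
   K ∩ B by (ii), and its witness in Omega solves (D^F). *)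

Set Implicit Arguments. Unset Strict Implicit. Unset Printing Implicit Defensive.
Import Order.TTheory GRing.Theory Num.Theory.
Import numFieldTopology.Exports.
Local Open Scope classical_set_scope.
Local Open Scope ring_scope.
Local Open Scope ereal_scope.

Section CConjugate.
Variables (R : realType) (X : tvsType R).
Implicit Types (h : X -> \bar R) (l : X -> R) (w : Wsp X).

Lemma IsDual0 : IsDual (fun _ : X => 0%R).
Proof. by split; [move=> *; rewrite mulr0 addr0 | exact: cst_continuous]. Qed.

Lemma IsDual_lin0 l : IsDual l -> l 0%R = 0%R.
Proof.
move=> [hl _]; have := hl 1%R 0%R 0%R; rewrite scale1r addr0 mul1r.
by move/(congr1 (fun t : R => (t - l 0)%R)) => /=; rewrite addrK subrr => <-.
Qed.

Lemma IsDual_linB l x y : IsDual l -> l (x - y)%R = (l x - l y)%R.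
Proof.
move=> hl; have := hl.1 1%R x (- y)%R; rewrite scale1r mul1r => ->.
have := hl.1 (-1)%R y 0%R; rewrite addr0 scaleN1r IsDual_lin0 // addr0 => ->.
by rewrite mulN1r.
Qed.

Lemma IsDualMr l (k : R) : IsDual l -> IsDual (fun z => l z * k)%R.
Proof.
move=> [hl hc]; split; first by move=> a y z; rewrite hl mulrDl mulrA.
move=> y; apply: (@continuous_comp _ _ _ l ( *%R^~ k)); first exact: hc.
exact: mulrr_continuous.
Qed.

Lemma cconj_ge h x w : cpl x w - h x <= cconj h w.
Proof. by apply: ereal_sup_ubound; exists x. Qed.

Lemma proper_fin_num h x : proper_fun h -> h x < +oo -> h x \is a fin_num.
Proof. by move=> [hN _] hx; rewrite fin_numE hN lt_eqF. Qed.

Lemma proper_cconj_gtNy h w : proper_fun h -> -oo < cconj h w.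
Proof.
move=> hh; have [x /(proper_fin_num hh) hx] := hh.2.
apply: lt_le_trans (cconj_ge h x w); rewrite /cpl -(fineK hx).
by case: ifP => _ //; rewrite -EFinB ltNyr.
Qed.

Lemma proper_cconj_fin_num h w : proper_fun h -> domW (cconj h) w ->
  cconj h w \is a fin_num.
Proof.
move=> hh [_ hw].
by rewrite fin_numE (lt_eqF hw) (gt_eqF (proper_cconj_gtNy _ hh)).
Qed.

Lemma proper_indicator (A : set X) : A !=set0 -> proper_fun (indicator_fun A).
Proof.
move=> [a ha]; split=> [x|]; first by rewrite /indicator_fun; case: asboolP.
by exists a; rewrite /indicator_fun asboolT // ltry.
Qed.

Lemma domW_cconj_indicator (A : set X) :
  domW (cconj (indicator_fun A)) ((fun _ => 0%R), (fun _ => 0%R), 1%R).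
Proof.
split; first by split; exact: IsDual0.
apply: (@le_lt_trans _ _ 0); last exact: ltry.
apply: ge_ereal_sup => _ [a _ <-]; rewrite /cpl /= ltr01 /indicator_fun.
by case: asboolP => _; [rewrite sube0 | rewrite /= addeNy leNye].
Qed.

(* Normalising a functional that strictly separates (x, h x - e) from epi h to
   slope -1 in the real coordinate yields an e-subgradient of h at x, i.e. a
   point of the form (u*, 0, 1) of dom h^c. *)
Lemma e_convex_cconj_approx h x (e : R) :
  proper_fun h -> e_convex_fun h -> h x \is a fin_num -> (0 < e)%R ->
  exists u, domW (cconj h) u /\ cconj h u <= (u.1.1 x - fine (h x) + e)%:E.
Proof.
move=> hh hconv hx he; set r := fine (h x).
have hxr : h x <= r%:E by rewrite /r fineK.
have notle : ~ (h x <= (r - e)%:E) by rewrite -(fineK hx) lee_fin -/r => ?; lra.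
have [xs [a [hxs sep]]] := hconv _ _ notle.
have a_lt0 : (a < 0)%R.
  by have := sep x r hxr; rewrite subrr IsDual_lin0 // add0r => ?; nra.
set k := ((- a)^-1)%R.
have k_gt0 : (0 < k)%R by rewrite /k invr_gt0 oppr_gt0.
have ak : (a * k = -1)%R by rewrite /k invrN mulrN mulfV // lt_eqF.
set u : Wsp X := ((fun z => xs z * k)%R, (fun _ => 0%R), 1%R).
have hu : cconj h u <= (u.1.1 x - r + e)%:E.
  apply: ge_ereal_sup => _ [z _ <-]; rewrite /cpl /= ltr01.
  have := hh.1 z; case hz: (h z) => [q| |] // _; last by rewrite /= addeNy leNye.
  have := sep z q; rewrite hz lexx IsDual_linB // => /(_ isT) hsep.
  have : ((xs z - xs x + a * (q - (r - e))) * k < 0)%R by rewrite pmulr_llt0.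
  rewrite mulrDl mulrBl (mulrC a) -mulrA ak mulrN1 -EFinB lee_fin => ?; lra.
exists u; split=> //; split; last exact: le_lt_trans hu (ltry _).
by split=> /=; [exact: IsDualMr | exact: IsDual0].
Qed.

Lemma lee_sub_swap (F : \bar R) (gr dr s : R) :
  F <= (s + fine (gr%:E - dr%:E))%:E <-> (- s)%:E <= gr%:E - F - dr%:E.
Proof.
rewrite -EFinB /=; case: F => [r| |].
- by rewrite -!EFinB !lee_fin; split => ?; lra.
- by rewrite /= addeNy leeNy_eq leye_eq.
- by rewrite /= addey // addye // leey leNye.
Qed.

End CConjugate.

Section StrongDuality.
Variables (R : realType) (X : tvsType R) (f g : X -> \bar R) (A : set X).
Hypotheses (hf : proper_fun f) (hg : proper_fun g)
  (hfg : forall x, f x < +oo -> g x < +oo) (hA : A !=set0) (hge : e_convex_fun g).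

Local Notation D := (domW (cconj g)).
Local Notation E := (domW (cconj (indicator_fun A))).
Local Notation phi := (phiF f g A).

Lemma cconj_g_fin_num u : D u -> cconj g u \is a fin_num.
Proof. exact: proper_cconj_fin_num. Qed.

Lemma cconj_indicator_fin_num xw :
  E xw -> cconj (indicator_fun A) xw \is a fin_num.
Proof. exact/proper_cconj_fin_num/proper_indicator. Qed.

Lemma fin_num_g x : f x \is a fin_num -> g x \is a fin_num.
Proof.
by move=> hx; apply: (proper_fin_num hg); apply: hfg; rewrite -(fineK hx) ltry.
Qed.

Lemma phiF_lty u xw : D u -> E xw -> phi u xw < +oo.
Proof.
move=> hu hxw; rewrite /phiF.
rewrite -(fineK (cconj_g_fin_num hu)) -(fineK (cconj_indicator_fin_num hxw)).
set w := (_, _, _ : R); have := proper_cconj_gtNy w hf.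
by case: (cconj f w) => [r _| _|] //; rewrite -!EFinB ltry.
Qed.

Lemma cconj_fminc xw w : w.1.2 = (fun _ => 0%R) -> (0 < w.2)%R ->
  cconj (fminc f xw) w =
  cconj f ((fun z => w.1.1 z - xw.1.1 z)%R, (fun z => - xw.1.2 z)%R, xw.2).
Proof.
move=> hw2 hw; rewrite /cconj; congr ereal_sup; apply: eq_imagel => x _.
rewrite /fminc /cpl /subd /= hw2 hw.
case: ifP => _; case: (f x) => [r| |] //.
by rewrite EFinN oppeK /dual_adde -!EFinB opprD addrA addrAC.
Qed.

Lemma mem_pieceWR_B u xw (p : Wsp X * R) : Bset p -> D u -> E xw ->
  pieceWR f g A u xw p <-> (- p.2)%:E <= phi u xw.
Proof.
case: p => [[[a b] c] d]; rewrite /Bset /= => -[-> [-> hc]] hu hxw.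
rewrite /pieceWR /translateWR /shiftpt /phiF.
rewrite -(fineK (cconj_g_fin_num hu)) -(fineK (cconj_indicator_fin_num hxw)) /=.
set gr := fine (cconj g u); set dr := fine (cconj (indicator_fun A) xw).
apply: (iff_trans _ (lee_sub_swap _ gr dr d)); split.
- case=> [[[[z1 z2] z3] z4]] [_ hz]; rewrite /subWR /= => -[h1 h2 h3 h4].
  have z1E : z1 = u.1.1.
    by apply/funext => t; apply/eqP; rewrite -subr_eq0 (congr1 (fun F => F t) h1).
  have z2E : z2 = (fun _ => 0%R).
    by apply/funext => t; have := congr1 (fun F => F t) h2; rewrite /= subr0.
  rewrite subr0 in h3; subst z1 z2 z3.
  by move: hz; rewrite /= cconj_fminc //= -h4 subrK.
- move=> h; exists ((u.1.1, (fun _ => 0%R), c), (d + (gr - dr))%R).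
    split; first by split; [exact: hu.1.1 | exact: IsDual0].
    by rewrite /= cconj_fminc.
  rewrite /subWR /=; congr (_, _, _, _); rewrite ?subr0 ?addrK //.
  by apply/funext => t; rewrite subrr.
Qed.

Lemma phiF_gtNy_halfspaces x u xw : A x -> f x \is a fin_num -> -oo < phi u xw ->
  (xw.1.2 x < xw.2)%R /\ (- xw.1.2 x < xw.2)%R.
Proof.
move=> hAx hfx; rewrite /phiF; set w := (_, _, _ : R) => hphi.
have hF := cconj_ge f x w; have hD := cconj_ge (indicator_fun A) x xw.
rewrite /indicator_fun asboolT // sube0 in hD.
have [hy|hy] := boolP (xw.1.2 x < xw.2)%R; last first.
  move: hD; rewrite /cpl (negbTE hy) leye_eq => /eqP hD.
  by move: hphi; rewrite hD /= addeNy.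
split=> //; apply: contraTT hphi => hy'.
move: hF; rewrite /cpl /= (negbTE hy') -(fineK hfx) addye // leye_eq => /eqP ->.
by rewrite /= addeNy addNye.
Qed.

Lemma phiF_le x u xw : A x -> f x \is a fin_num -> cconj g u \is a fin_num ->
  phi u xw <= cconj g u - (u.1.1 x)%:E + f x.
Proof.
move=> hAx hfx hG; have [->|] := eqVneq (phi u xw) -oo; first exact: leNye.
rewrite -ltNye => /(phiF_gtNy_halfspaces hAx hfx) [hy hy'].
rewrite /phiF; set w := (_, _, _ : R).
have hF := cconj_ge f x w; have hD := cconj_ge (indicator_fun A) x xw.
rewrite /cpl /= hy' in hF; rewrite /cpl hy /indicator_fun asboolT // sube0 in hD.
rewrite -(fineK hfx) -(fineK hG) in hF *.
apply: le_trans (leeB (leeB (lexx _) hF) hD) _.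
by rewrite -!EFinB lee_fin; lra.
Qed.

Lemma le_vP y :
  (forall x u, A x -> f x \is a fin_num -> D u ->
     y <= cconj g u - (u.1.1 x)%:E + f x) ->
  y <= vP f g A.
Proof.
move=> H; apply: le_ereal_inf_tmp => _ [x _ <-].
rewrite /indicator_fun; case: asboolP => hAx; last first.
  by case: (subd _ _) => *; rewrite /dual_adde leey.
case hfx: (f x) (hf.1 x) => [r| |] // _; last by rewrite /subd /dual_adde leey.
have hgx : g x \is a fin_num by apply: fin_num_g; rewrite hfx.
apply/lee_addgt0Pr => e he.
have [u [hu hue]] := e_convex_cconj_approx hg hge hgx he.
apply: le_trans (H x u hAx _ hu) _; first by rewrite hfx.
move: hue; rewrite hfx -(fineK (cconj_g_fin_num hu)) -(fineK hgx).
by rewrite /subd /dual_adde -!EFinB -!EFinD !lee_fin /=; lra.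
Qed.

Lemma vDFbar_le_vP : vDFbar f g A <= vP f g A.
Proof.
apply: le_vP => x u hAx hfx hu.
apply: (@le_trans _ _ (ereal_sup [set phi u xw | xw in inZ (X:=X)])).
  by apply: ereal_inf_lbound; exists u.
by apply: ge_ereal_sup => _ [xw _ <-]; exact: phiF_le (cconj_g_fin_num hu).
Qed.

Lemma le_vP_forall_exists y :
  (forall u, D u -> exists2 xw, E xw & y <= phi u xw) -> y <= vP f g A.
Proof.
move=> hK; apply: le_vP => x u hAx hfx hu; have [xw _ hy] := hK u hu.
exact: le_trans hy (phiF_le _ hAx hfx (cconj_g_fin_num hu)).
Qed.

Lemma vDF_le_vDFbar : vDF f g A <= vDFbar f g A.
Proof.
apply: ge_ereal_sup => _ [xw hxw <-]; apply: le_ereal_inf_tmp => _ [u hu <-].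
apply: (@le_trans _ _ (phi u xw)); first by apply: ereal_inf_lbound; exists u.
by apply: ereal_sup_ubound; exists xw.
Qed.

Lemma mem_OmegaB p : Bset p ->
  OmegaSet f g A p <-> exists2 xw, E xw & forall u, D u -> (- p.2)%:E <= phi u xw.
Proof.
move=> hB; split=> -[xw hxw hall]; exists xw => // u hu.
  exact/(mem_pieceWR_B hB hu hxw)/hall.
exact/(mem_pieceWR_B hB hu hxw)/hall.
Qed.

Lemma mem_KsetB p : Bset p ->
  Kset f g A p <-> forall u, D u -> exists2 xw, E xw & (- p.2)%:E <= phi u xw.
Proof.
move=> hB; split=> hall u hu; have [xw hxw hp] := hall u hu; exists xw => //.
  exact/(mem_pieceWR_B hB hu hxw).
exact/(mem_pieceWR_B hB hu hxw).
Qed.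

Lemma domW_cconj_g_neq0 : D !=set0.
Proof.
have [x /(proper_fin_num hg) hx] := hg.2.
by have [u [hu _]] := e_convex_cconj_approx hg hge hx ltr01; exists u.
Qed.

Lemma vP_lty_feasible : vP f g A < +oo -> exists x, A x /\ f x \is a fin_num.
Proof.
move=> vP_lty; apply: contrapT => infeasible.
suff : +oo <= vP f g A by rewrite leNgt vP_lty.
by apply: le_vP => x u hAx hfx; exfalso; apply: infeasible; exists x.
Qed.

Lemma strong_duality_DF_DFbar : strong_duality_DF f g A ->
  strong_duality_DFbar f g A /\
  OmegaSet f g A `&` @Bset R X = Kset f g A `&` @Bset R X.
Proof.
move=> [vPE [xb [hxb xb_opt]]].
have vDFbarE : vDFbar f g A = vDF f g A.
  by apply/eqP; rewrite eq_le vDF_le_vDFbar -vPE vDFbar_le_vP.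
split.
  by split=> [|u hu]; rewrite vDFbarE //; exists xb; split=> //; exact: xb_opt.
apply/seteqP; split=> p [hp hB]; split=> //.
- move/(mem_OmegaB hB): hp => -[xw hxw hall].
  by apply/(mem_KsetB hB) => u hu; exists xw => //; exact: hall.
- apply/(mem_OmegaB hB); exists xb => // u hu; apply: le_trans (xb_opt u hu).
  by rewrite -vPE; exact/le_vP_forall_exists/(mem_KsetB hB).
Qed.

Lemma strong_duality_DF_vPNy : vP f g A = -oo -> strong_duality_DF f g A.
Proof.
move=> vPNy; have vDFNy : vDF f g A = -oo.
  by apply/eqP; rewrite -leeNy_eq -vPNy (le_trans vDF_le_vDFbar vDFbar_le_vP).
split; first by rewrite vDFNy.
exists ((fun _ => 0%R), (fun _ => 0%R), 1%R).
split; first exact: domW_cconj_indicator.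
by rewrite vDFNy => *; exact: leNye.
Qed.

Lemma strong_duality_DFbar_vP_lty : strong_duality_DFbar f g A -> vP f g A < +oo.
Proof.
move=> [vPE DFbar_opt]; have [u hu] := domW_cconj_g_neq0.
have [xw [hxw hle]] := DFbar_opt u hu.
by rewrite vPE; exact: le_lt_trans hle (phiF_lty hu hxw).
Qed.

Lemma strong_duality_DFbar_DF : strong_duality_DFbar f g A ->
  OmegaSet f g A `&` @Bset R X = Kset f g A `&` @Bset R X ->
  strong_duality_DF f g A.
Proof.
move=> hDFbar OmegaKE; have [vPNy|] := eqVneq (vP f g A) -oo.
  exact: strong_duality_DF_vPNy.
rewrite -ltNye => vP_gtNy; have vP_lty := strong_duality_DFbar_vP_lty hDFbar.
have [vPE DFbar_opt] := hDFbar; set v := fine (vP f g A).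
have vPv : vP f g A = v%:E by rewrite fineK // fin_numE -ltNye vP_gtNy lt_eqF.
pose p : Wsp X * R := (((fun _ => 0%R), (fun _ => 0%R), 1%R), - v)%R.
have hB : Bset p by split; [|split] => //=; exact: ltr01.
have : (Kset f g A `&` @Bset R X) p.
  split=> //; apply/(mem_KsetB hB) => u hu; have [xw [hxw hle]] := DFbar_opt u hu.
  by exists xw; rewrite //= opprK -vPv vPE.
rewrite -OmegaKE => -[/(mem_OmegaB hB) [xb hxb]]; rewrite /= opprK => xb_opt _.
have [x [hAx hfx]] := vP_lty_feasible vP_lty.
have [u0 hu0] := domW_cconj_g_neq0.
have xbZ : inZ xb.
  have := phiF_gtNy_halfspaces hAx hfx (lt_le_trans (ltNyr v) (xb_opt u0 hu0)).
  by split; [exact: hxb.1 | lra].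
have vDFE : vDF f g A = v%:E.
  apply/eqP; rewrite eq_le -vPv {1}vPE vDF_le_vDFbar vPv.
  apply: (@le_trans _ _ (ereal_inf [set phi u xb | u in D])).
    by apply: le_ereal_inf_tmp => _ [u hu <-]; exact: xb_opt.
  by apply: ereal_sup_ubound; exists xb.
split; first by rewrite vDFE.
by exists xb; split=> // u hu; rewrite vDFE; exact: xb_opt.
Qed.

End StrongDuality.

Theorem corollary5p6 (R : realType) (X : tvsType R)
  (f g : X -> \bar R) (A : set X) :
  hausdorff_space X ->
  (exists x : X, x != 0%R) ->
  proper_fun f -> convex_fun f ->
  proper_fun g -> convex_fun g ->
  (forall x, f x < +oo -> g x < +oo) ->
  A !=set0 ->
  e_convex_fun g ->
  (strong_duality_DF f g A <->
   (strong_duality_DFbar f g A /\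
    OmegaSet f g A `&` @Bset R X = Kset f g A `&` @Bset R X)).
Proof.
move=> _ _ hf _ hg _ hfg hA hge; split.
- exact: strong_duality_DF_DFbar.
- by case; exact: strong_duality_DFbar_DF.
Qed.
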